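(* If $S$ is an IP-regular partial semigroup with only finitely many idempotent elements, then every nonprincipal strongly productive ultrafilter on $S$ is regular.
   Context: A partial semigroup is a set $P$ with a partially defined multiplication such that $(ab)c=a(bc)$ whenever both sides are defined. Any subset $X\subseteq P$ is a partial semigroup with the restricted operation ($ab$ defined in $X$ iff $a,b\in X$ and $ab$ is defined in $P$ and lies in $X$). An element $a$ is idempotent if $aa$ is defined and equals $a$; $E(P)$ is the set of idempotents. For a sequence $\vec{x}=(x_n)_{n\in\omega}$ in $P$ such that all products $\prod_{i\in a}x_i$ (increasing order of indices, $a$ finite nonempty subset of $\omega$) are defined, $\mathrm{FP}(\vec{x})$ is the set of these products and $\mathrm{FP}_k(\vec{x})=\mathrm{FP}((x_{n+k})_n)$. A subset of $P$ is an IP-set if it contains such an $\mathrm{FP}(\vec{x})$. An ultrafilter $p$ on $P$ is strongly productive if every $A\in p$ contains some $\mathrm{FP}(\vec{x})\in p$; a nonprincipal strongly productive $p$ is regular if some $B\in p$ has the property that whenever all finite products of $\vec{x}$ are defined and lie in $B$, the set $x_0\mathrm{FP}_1(\vec{x})$ is not in $p$. $P$ is strongly IP-regular if for every sequence $\vec{x}$ in $P$ all of whose finite products are defined, the set $x_0\mathrm{FP}_1(\vec{x})$ is not an IP-set (in $P$). $P$ is IP-regular if $P\setminus E(P)$ is a union of finitely many subsets each of which is strongly IP-regular (with the induced partial semigroup structure). *)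

From Stdlib Require Import List Sorted Arith.
Import ListNotations.
Set Implicit Arguments.

Section PS.
Variable T : Type.
(* partial multiplication: [mul a b = Some c] means ab is defined and equals c *)
Variable mul : T -> T -> option T.

Definition partial_assoc : Prop :=
  forall a b c ab bc d e,
    mul a b = Some ab -> mul ab c = Some d ->
    mul b c = Some bc -> mul a bc = Some e -> d = e.

Definition idempotent (a : T) : Prop := mul a a = Some a.

(* Induced partial semigroup on a subset X : ab defined in X iff a,b in X,
   ab defined in P and ab in X.  The whole P is X = fun _ => True. *)
Definition mulin (X : T -> Prop) (a b c : T) : Prop :=
  X a /\ X b /\ mul a b = Some c /\ X c.

Definition Pfull : T -> Prop := fun _ => True.

(* [lprod X x l z]: the product of x_i (i in l, in the order of l),
   bracketed to the left, is defined in X and equals z. *)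
Inductive lprod (X : T -> Prop) (x : nat -> T) : list nat -> T -> Prop :=
| lprod1 : forall i, X (x i) -> lprod X x [i] (x i)
| lprodS : forall l i p q, lprod X x l p -> mulin X p (x i) q ->
           lprod X x (l ++ [i]) q.

(* finite nonempty subsets of omega = nonempty strictly increasing lists *)
Definition fin_index (l : list nat) : Prop := l <> [] /\ Sorted lt l.

Definition FPdef (X : T -> Prop) (x : nat -> T) : Prop :=
  forall l, fin_index l -> exists z, lprod X x l z.

Definition FP (X : T -> Prop) (x : nat -> T) : T -> Prop :=
  fun z => exists l, fin_index l /\ lprod X x l z.

Definition shift (x : nat -> T) (k : nat) : nat -> T := fun n => x (n + k).

Definition x0FP1 (X : T -> Prop) (x : nat -> T) : T -> Prop :=
  fun z => exists y, FP X (shift x 1) y /\ mulin X (x 0) y z.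

Definition IPset (X : T -> Prop) (A : T -> Prop) : Prop :=
  exists y, FPdef X y /\ (forall z, FP X y z -> A z).

Definition strongly_IP_regular (X : T -> Prop) : Prop :=
  forall x, FPdef X x -> ~ IPset X (x0FP1 X x).

Definition IP_regular : Prop :=
  exists Xs : list (T -> Prop),
    (forall t, ~ idempotent t <-> exists X, In X Xs /\ X t) /\
    (forall X, In X Xs -> strongly_IP_regular X).

Definition finitely_many_idempotents : Prop :=
  exists l : list T, forall e, idempotent e -> In e l.

Definition ultrafilter (p : (T -> Prop) -> Prop) : Prop :=
  p (fun _ => True) /\ ~ p (fun _ => False) /\
  (forall A B, p A -> (forall t, A t -> B t) -> p B) /\
  (forall A B, p A -> p B -> p (fun t => A t /\ B t)) /\
  (forall A, p A \/ p (fun t => ~ A t)).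

Definition principal (p : (T -> Prop) -> Prop) : Prop :=
  exists a, forall A, p A <-> A a.

Definition strongly_productive (p : (T -> Prop) -> Prop) : Prop :=
  forall A, p A -> exists x, FPdef Pfull x /\
    (forall z, FP Pfull x z -> A z) /\ p (FP Pfull x).

Definition regular (p : (T -> Prop) -> Prop) : Prop :=
  ~ principal p /\ strongly_productive p /\
  exists B, p B /\ forall x, FPdef Pfull x ->
    (forall z, FP Pfull x z -> B z) -> ~ p (x0FP1 Pfull x).

End PS.

From Stdlib Require Import List Sorted Lia Classical.
Import ListNotations.
Set Implicit Arguments.

(* Since E(S) is finite and p is nonprincipal, p contains S \ E(S), which is
   a finite union of strongly IP-regular pieces; hence p contains one such
   piece X, and X is the witness B of regularity.  Suppose FP(x) is contained
   in X and x_0 FP_1(x) is in p.  Strong productivity yields y with FP(y)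
   contained in x_0 FP_1(x) and in X.  Because all finite products of x (and
   of y) lie in X, products computed in S and in the induced partial
   semigroup X coincide, so x_0 FP_1(x), computed in X, is an IP-set of X:
   this contradicts strong IP-regularity of X. *)

Lemma Sorted_app_l (A : Type) (R : A -> A -> Prop) (l m : list A) :
  Sorted R (l ++ m) -> Sorted R l.
Proof.
  revert m; induction l as [|a l IH]; intros m Hs; simpl in *.
  - constructor.
  - apply Sorted_inv in Hs as [Hs Hhd]. constructor.
    + exact (IH m Hs).
    + destruct l as [|b l]; constructor. now inversion Hhd.
Qed.

Lemma Sorted_map_mono (A B : Type) (R : A -> A -> Prop) (R' : B -> B -> Prop)
  (f : A -> B) : (forall a b, R a b -> R' (f a) (f b)) ->
  forall l, Sorted R l -> Sorted R' (map f l).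
Proof.
  intros Hf l Hs; induction Hs as [|a l _ IH Hhd]; simpl; constructor; auto.
  destruct Hhd; simpl; constructor; auto.
Qed.

Lemma fin_index_singleton (i : nat) : fin_index [i].
Proof. split; [discriminate | repeat constructor]. Qed.

Lemma fin_index_shift (l : list nat) :
  fin_index l -> fin_index (map (fun n => n + 1) l).
Proof.
  intros [Hne Hs]; split.
  - destruct l; [contradiction | discriminate].
  - apply (@Sorted_map_mono nat nat lt lt); [lia | exact Hs].
Qed.

Section FiniteProducts.
Variable T : Type.
Variable mul : T -> T -> option T.

Lemma lprod_nonnil (X : T -> Prop) x l z : lprod mul X x l z -> l <> [].
Proof. destruct 1; [discriminate | destruct l; discriminate]. Qed.

Lemma fin_index_app_l (X : T -> Prop) x l i z :
  lprod mul X x l z -> fin_index (l ++ [i]) -> fin_index l.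
Proof.
  intros Hz [_ Hs]; split; [exact (lprod_nonnil Hz) | eapply Sorted_app_l; exact Hs].
Qed.

Lemma lprod_full (X : T -> Prop) x l z :
  lprod mul X x l z -> lprod mul (@Pfull T) x l z.
Proof.
  induction 1 as [i _ | l i p q _ IH [_ [_ [Hm _]]]].
  - now constructor.
  - econstructor; [exact IH | repeat split; auto].
Qed.

Lemma FP_full (X : T -> Prop) x z : FP mul X x z -> FP mul (@Pfull T) x z.
Proof. intros [l [Hl Hz]]; exists l; split; [exact Hl | exact (lprod_full Hz)]. Qed.

Lemma lprod_shift (X : T -> Prop) x l z :
  lprod mul X (shift x 1) l z -> lprod mul X x (map (fun n => n + 1) l) z.
Proof.
  induction 1 as [i Hxi | l i p q _ IH Hm].
  - exact (lprod1 mul X x (i + 1) Hxi).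
  - rewrite map_app; econstructor; [exact IH | exact Hm].
Qed.

Lemma FP_shift (X : T -> Prop) x z : FP mul X (shift x 1) z -> FP mul X x z.
Proof.
  intros [l [Hl Hz]]; exists (map (fun n => n + 1) l).
  split; [exact (fin_index_shift Hl) | exact (lprod_shift Hz)].
Qed.

Section Restriction.
Variable X : T -> Prop.
Variable x : nat -> T.
Hypothesis FP_in_X : forall z, FP mul (@Pfull T) x z -> X z.

Lemma lprod_restrict l z :
  lprod mul (@Pfull T) x l z -> fin_index l -> lprod mul X x l z.
Proof.
  induction 1 as [i _ | l i p q Hp IH [_ [_ [Hm _]]]]; intros Hl.
  - constructor; apply FP_in_X; exists [i].
    split; [apply fin_index_singleton | now constructor].
  - assert (Hl' : fin_index l) by exact (fin_index_app_l i Hp Hl).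
    econstructor; [exact (IH Hl') | repeat split].
    + apply FP_in_X; exists l; split; assumption.
    + apply FP_in_X; exists [i].
      split; [apply fin_index_singleton | now constructor].
    + exact Hm.
    + apply FP_in_X; exists (l ++ [i]).
      split; [exact Hl | econstructor; [exact Hp | repeat split; auto]].
Qed.

Lemma FPdef_restrict : FPdef mul (@Pfull T) x -> FPdef mul X x.
Proof.
  intros Hdef l Hl; destruct (Hdef l Hl) as [z Hz].
  exists z; exact (lprod_restrict Hz Hl).
Qed.

Lemma FP_restrict z : FP mul (@Pfull T) x z -> FP mul X x z.
Proof. intros [l [Hl Hz]]; exists l; split; [exact Hl | exact (lprod_restrict Hz Hl)]. Qed.

End Restriction.

(* An element of x_0 FP_1(x), computed in S, that lies in X is an element of
   x_0 FP_1(x) computed in X, provided FP(x) lies in X.  (The product itself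
   must be assumed in X: without associativity x_0 y need not be a finite
   product of x.) *)
Lemma x0FP1_restrict (X : T -> Prop) x z :
  (forall u, FP mul (@Pfull T) x u -> X u) ->
  x0FP1 mul (@Pfull T) x z -> X z -> x0FP1 mul X x z.
Proof.
  intros FP_in_X [w [Hw [_ [_ [Hm _]]]]] Hz.
  assert (Hshift : forall u, FP mul (@Pfull T) (shift x 1) u -> X u).
  { intros u Hu; apply FP_in_X, FP_shift, Hu. }
  exists w; split; [exact (FP_restrict X Hshift Hw) | repeat split].
  - apply FP_in_X; exists [0].
    split; [apply fin_index_singleton | now constructor].
  - exact (Hshift w Hw).
  - exact Hm.
  - exact Hz.
Qed.

End FiniteProducts.

Section Ultrafilters.
Variable T : Type.
Variable p : (T -> Prop) -> Prop.
Hypothesis p_ultra : ultrafilter p.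

Lemma ultrafilter_finite_principal (l : list T) :
  p (fun t => In t l) -> principal p.
Proof.
  destruct p_ultra as (_ & Hnot0 & Hup & Hmeet & Hdich).
  induction l as [|a l IH]; intros Hl.
  - exfalso; apply Hnot0; eapply Hup; [exact Hl | intros t []].
  - destruct (Hdich (fun t => a = t)) as [Ha | Hna].
    + exists a; intros A; split; intros HA.
      * apply NNPP; intros HnA; apply Hnot0.
        eapply Hup; [exact (Hmeet _ _ HA Ha) | intros t [HAt <-]; contradiction].
      * eapply Hup; [exact Ha | intros t <-; exact HA].
    + apply IH; eapply Hup; [exact (Hmeet _ _ Hl Hna) |].
      intros t [[<- | Ht] Hne]; [contradiction | exact Ht].
Qed.

Lemma nonprincipal_cofinite (S : T -> Prop) (l : list T) :
  ~ principal p -> (forall t, S t -> In t l) -> p (fun t => ~ S t).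
Proof.
  intros Hnp HS; destruct p_ultra as (_ & _ & Hup & _ & Hdich).
  destruct (Hdich S) as [HpS | HpnS]; [| exact HpnS].
  exfalso; apply Hnp, (ultrafilter_finite_principal l).
  eapply Hup; [exact HpS | exact HS].
Qed.

Lemma ultrafilter_union_list (Xs : list (T -> Prop)) :
  p (fun t => exists X, In X Xs /\ X t) -> exists X, In X Xs /\ p X.
Proof.
  destruct p_ultra as (_ & Hnot0 & Hup & Hmeet & Hdich).
  induction Xs as [|X0 Xs IH]; intros Hunion.
  - exfalso; apply Hnot0; eapply Hup; [exact Hunion | intros t (X & [] & _)].
  - destruct (Hdich X0) as [HX0 | HnX0]; [exists X0; split; [left |]; auto |].
    destruct IH as (X & HinX & HpX); [| exists X; split; [right |]; auto].
    eapply Hup; [exact (Hmeet _ _ Hunion HnX0) |].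
    intros t [(X & [<- | HinX] & HXt) HnX0t]; [contradiction | eauto].
Qed.

End Ultrafilters.

(* The heart of the argument: a strongly IP-regular set X in a strongly
   productive ultrafilter p witnesses regularity of p.  If FP(x) lies in X and
   x_0 FP_1(x) were in p, then some FP(y) in p would lie in x_0 FP_1(x) and in
   X, making x_0 FP_1(x), computed in X, an IP-set of X. *)
Lemma strongly_IP_regular_witness (T : Type) (mul : T -> T -> option T)
  (p : (T -> Prop) -> Prop) (X : T -> Prop) (x : nat -> T) :
  ultrafilter p -> strongly_productive mul p ->
  strongly_IP_regular mul X -> p X ->
  FPdef mul (@Pfull T) x -> (forall z, FP mul (@Pfull T) x z -> X z) ->
  ~ p (x0FP1 mul (@Pfull T) x).
Proof.
  intros (_ & _ & _ & Hmeet & _) Hsp HXreg HpX Hdx HFx Hpx.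
  destruct (Hsp _ (Hmeet _ _ Hpx HpX)) as (y & Hdy & HFy & _).
  assert (HFyX : forall z, FP mul (@Pfull T) y z -> X z) by (intros z Hz; apply HFy, Hz).
  apply (HXreg x (FPdef_restrict X HFx Hdx)).
  exists y; split; [exact (FPdef_restrict X HFyX Hdy) |].
  intros z Hz; destruct (HFy z (FP_full Hz)) as [Hx0z HXz].
  exact (x0FP1_restrict X HFx Hx0z HXz).
Qed.

Theorem mainTheorem4 (T : Type) (mul : T -> T -> option T) :
  partial_assoc mul ->
  IP_regular mul ->
  finitely_many_idempotents mul ->
  forall p : (T -> Prop) -> Prop,
    ultrafilter p -> ~ principal p -> strongly_productive mul p ->
    regular mul p.
Proof.
  intros _ (Xs & HXs & HXreg) (lE & HE) p Hu Hnp Hsp.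
  split; [exact Hnp | split; [exact Hsp |]].
  (* p contains the non-idempotents, hence one strongly IP-regular piece X. *)
  assert (HnE : p (fun t => ~ idempotent mul t))
    by exact (nonprincipal_cofinite Hu (idempotent mul) lE Hnp HE).
  destruct (ultrafilter_union_list Hu Xs) as (X & HinX & HpX).
  { destruct Hu as (_ & _ & Hup & _); eapply Hup; [exact HnE | apply HXs]. }
  exists X; split; [exact HpX |].
  intros x Hdx HFx.
  exact (strongly_IP_regular_witness Hu Hsp (HXreg X HinX) HpX Hdx HFx).
Qed.
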